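(* Let $\mathfrak m=\mathfrak m_{-1}\oplus\mathfrak m_{-2}$ be a non-degenerate graded nilpotent Lie algebra of depth $2$ over $\mathbb C$, generated by $\mathfrak m_{-1}$, with $\dim\mathfrak m_{-2}=2$. Then the Tanaka prolongation of $\mathfrak m$ is infinite-dimensional.
   Context: A GNLA is a negatively graded Lie algebra $\mathfrak m=\bigoplus_{i\ge1}\mathfrak m_{-i}$ generated by $\mathfrak m_{-1}$; non-degenerate means $\mathfrak m_{-1}$ contains no non-zero central element. The Tanaka prolongation $\mathfrak g(\mathfrak m)$ is defined by $\mathfrak g_i(\mathfrak m)=\mathfrak m_i$ for $i<0$ and recursively, for $k\ge0$, $\mathfrak g_k(\mathfrak m)=\{\phi:\mathfrak m\to\bigoplus_{i<k}\mathfrak g_i(\mathfrak m)\text{ linear}\mid \phi(\mathfrak m_{-i})\subset\mathfrak g_{k-i}(\mathfrak m),\ \phi([x,y])=[\phi(x),y]+[x,\phi(y)]\ \forall x,y\in\mathfrak m\}$. *)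

From HB Require Import structures.
From mathcomp Require Import all_boot all_order all_algebra.
Set Implicit Arguments. Unset Strict Implicit. Unset Printing Implicit Defensive.
Import GRing.Theory Num.Theory.
Local Open Scope ring_scope.

(* A depth-2 graded Lie algebra  m = m_{-1} (+) m_{-2}  with
   m_{-1} = 'rV[F]_n, m_{-2} = 'rV[F]_2 and bracket
   [x,y] = omega x y on m_{-1} x m_{-1} (all other brackets in m vanish).

   Tanaka prolongation: degree d = L - 2 is stored at level L : nat.
   Level 0 = m_{-2}, level 1 = m_{-1}, and an element of degree p >= 0
   (level p+2) is a graded map phi : m -> (+)_{i<p} g_i, i.e. a pair
   (phi|_{m_{-1}} : m_{-1} -> g_{p-1}, phi|_{m_{-2}} : m_{-2} -> g_{p-2}). *)

Section Tanaka.
Variable F : fieldType.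
Variable n : nat.

Fixpoint G (L : nat) : Type :=
  match L with
  | 0 => 'rV[F]_2
  | 1 => 'rV[F]_n
  | S ((S l) as l') => (('rV[F]_n -> G l') * ('rV[F]_2 -> G l))%type
  end.

(* (the inner matches pass the recursive call at level l' = L-1 as an
   argument, to satisfy Rocq's guard condition) *)
Fixpoint gzero (L : nat) : G L :=
  match L return G L with
  | 0 => 0
  | S l' =>
      match l' as k return G k -> G k.+1 with
      | 0 => fun _ => 0
      | S l => fun zl' => (fun _ => zl', fun _ => @gzero l)
      end (@gzero l')
  end.

Fixpoint gadd (L : nat) : G L -> G L -> G L :=
  match L return G L -> G L -> G L with
  | 0 => fun a b => a + b
  | S l' =>
      match l' as k return (G k -> G k -> G k) -> G k.+1 -> G k.+1 -> G k.+1 with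
      | 0 => fun _ a b => a + b
      | S l => fun addl' f g =>
          (fun x => addl' (f.1 x) (g.1 x), fun z => @gadd l (f.2 z) (g.2 z))
      end (@gadd l')
  end.

Fixpoint gscale (L : nat) (c : F) : G L -> G L :=
  match L return G L -> G L with
  | 0 => fun a => c *: a
  | S l' =>
      match l' as k return (G k -> G k) -> G k.+1 -> G k.+1 with
      | 0 => fun _ a => c *: a
      | S l => fun scl' f =>
          (fun x => scl' (f.1 x), fun z => @gscale l c (f.2 z))
      end (@gscale l' c)
  end.

Definition lin_into (k L : nat) (f : 'rV[F]_k -> G L) : Prop :=
  forall (a : F) x y, f (a *: x + y) = gadd (gscale a (f x)) (f y).

Variable omega : 'rV[F]_n -> 'rV[F]_n -> 'rV[F]_2.

Definition br1 (l : nat) : G l.+1 -> 'rV[F]_n -> G l :=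
  match l return G l.+1 -> 'rV[F]_n -> G l with
  | 0 => fun x y => omega x y
  | S l' => fun f y => f.1 y
  end.

Definition brL1 (l : nat) : 'rV[F]_n -> G l.+1 -> G l :=
  match l return 'rV[F]_n -> G l.+1 -> G l with
  | 0 => fun x y => omega x y
  | S l' => fun x f => @gscale l'.+1 (-1) (f.1 x)
  end.

Definition br2 (l : nat) (f : G l.+2) (z : 'rV[F]_2) : G l := f.2 z.

Definition brL2 (l : nat) (z : 'rV[F]_2) (f : G l.+2) : G l := @gscale l (-1) (f.2 z).

(* derivation condition phi([x,y]) = [phi x, y] + [x, phi y] on
   homogeneous x, y (phi of degree p, stored at level p+2);
   brackets landing in degree < -2 are zero and omitted. *)
Definition condA (p : nat) (phi : G p.+2) : Prop :=
  forall x y : 'rV[F]_n,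
    phi.2 (omega x y) = gadd (br1 (phi.1 x) y) (brL1 x (phi.1 y)).

Definition condB (p : nat) : G p.+2 -> Prop :=
  match p return G p.+2 -> Prop with
  | 0 => fun _ => True
  | S q => fun phi => forall (x : 'rV[F]_n) (z : 'rV[F]_2),
      gadd (br2 (phi.1 x) z) (brL1 x (phi.2 z)) = gzero q
  end.

Definition condC (p : nat) : G p.+2 -> Prop :=
  match p return G p.+2 -> Prop with
  | 0 => fun _ => True
  | 1 => fun _ => True
  | S (S q) => fun phi => forall (z w : 'rV[F]_2),
      gadd (br2 (phi.2 z) w) (brL2 z (phi.2 w)) = gzero q
  end.

Fixpoint mem_g (L : nat) : G L -> Prop :=
  match L return G L -> Prop with
  | 0 => fun _ => True
  | S p' =>
      match p' as k return (G k -> Prop) -> G k.+1 -> Prop with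
      | 0 => fun _ _ => True
      | S p => fun memp' phi =>
          [/\ @lin_into n p.+1 phi.1, @lin_into 2 p phi.2,
              (forall x, memp' (phi.1 x)),
              (forall z, @mem_g p (phi.2 z)) &
              [/\ @condA p phi, @condB p phi & @condC p phi]]
      end (@mem_g p')
  end.

(* an element of g(m) = (+)_{i >= -2} g_i : a finitely supported family of
   homogeneous components, each lying in the prolongation *)
Definition in_prolongation (e : forall L, G L) : Prop :=
  (forall L, mem_g (e L)) /\ exists B, forall L, (B <= L)%N -> e L = gzero L.

Definition lin_comb (d : nat) (c : 'I_d -> F) (e : 'I_d -> forall L, G L)
    (L : nat) : G L :=
  foldr (fun i acc => gadd (gscale (c i) (e i L)) acc) (gzero L) (enum 'I_d).

Definition prolongation_infinite_dim : Prop :=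
  forall d : nat, exists e : 'I_d -> forall L, G L,
    (forall i, in_prolongation (e i)) /\
    (forall c : 'I_d -> F, (forall L, lin_comb c e L = gzero L) ->
        forall i, c i = 0).

End Tanaka.

From mathcomp Require Import all_boot all_order all_algebra.
From Stdlib Require Import FunctionalExtensionality.
Import GRing.Theory.
Local Open Scope ring_scope.
Set Implicit Arguments. Unset Strict Implicit. Unset Printing Implicit Defensive.

(* The two coordinates of the bracket form a pencil of skew forms on m_{-1}.
   Over an algebraically closed field some nontrivial member a w0 + b w1 of
   the pencil is degenerate, with kernel vector v <> 0; then [v, m_{-1}] lies
   in the line {a z0 + b z1 = 0} of m_{-2}, i.e. [v, y] = mu(y) z for a linear
   form mu, which is nonzero by non-degeneracy.  For every j, the map
   (x_1, ..., x_j) |-> mu(x_1) ... mu(x_j) v, vanishing on m_{-2}, is an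
   element of degree j - 1 of the prolongation, so g(m) has nonzero
   components in all degrees. *)

Lemma nat_ind2 (P : nat -> Prop) :
  P 0%N -> P 1%N -> (forall L, P L -> P L.+1 -> P L.+2) -> forall L, P L.
Proof.
move=> P0 P1 PSS L; suff: P L /\ P L.+1 by case.
by elim: L => [|L [PL PL1]]; split=> //; apply: PSS.
Qed.

Lemma rV2_ext (R : Type) (u w : 'rV[R]_2) : u 0 0 = w 0 0 -> u 0 1 = w 0 1 -> u = w.
Proof.
move=> eq0 eq1; apply/matrixP => i [[|[|//]] j_lt]; rewrite [i]ord1.
  by rewrite (_ : Ordinal j_lt = 0) //; apply: val_inj.
by rewrite (_ : Ordinal j_lt = 1) //; apply: val_inj.
Qed.

Lemma rV2_kernel_line (F : fieldType) (a b : F) (u : 'rV[F]_2) :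
  (a != 0) || (b != 0) -> u != 0 -> a * u 0 0 + b * u 0 1 = 0 ->
  exists2 k, u 0 k != 0 &
    forall w : 'rV[F]_2, a * w 0 0 + b * w 0 1 = 0 -> w = (w 0 k / u 0 k) *: u.
Proof.
move=> ab_neq0 u_neq0.
have u_eq0 : u 0 0 = 0 -> u 0 1 = 0 -> u = 0.
  by move=> u0 u1; apply: rV2_ext; rewrite mxE.
case: (eqVneq a 0) ab_neq0 => [-> /= b_neq0 | a_neq0 _].
  have kernelE (x : 'rV[F]_2) : 0 * x 0 0 + b * x 0 1 = 0 -> x 0 1 = 0.
    by rewrite mul0r add0r => /eqP; rewrite mulf_eq0 (negbTE b_neq0) => /eqP.
  move=> /kernelE u1; have u0 : u 0 0 != 0.
    by apply: contraNneq u_neq0 => u0; apply/eqP/u_eq0.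
  exists 0 => // w /kernelE w1.
  by apply: rV2_ext; rewrite mxE ?divfK // w1 u1 mulr0.
have kernelE (x : 'rV[F]_2) : a * x 0 0 + b * x 0 1 = 0 -> x 0 0 = - (b / a) * x 0 1.
  move=> /eqP; rewrite addr_eq0 => /eqP ax; apply: (mulfI a_neq0).
  by rewrite ax mulrA mulrN mulrCA divff // mulr1 mulNr.
move=> /kernelE u0; have u1 : u 0 1 != 0.
  by apply: contraNneq u_neq0 => u1; apply/eqP/u_eq0; rewrite // u0 u1 mulr0.
exists 1 => // w /kernelE w0.
apply: rV2_ext; rewrite mxE ?divfK // w0 u0.
by rewrite mulrCA divfK.
Qed.

Lemma pencil_singular (F : closedFieldType) m (A B : 'M[F]_m) : (0 < m)%N ->
  exists a b : F, ((a != 0) || (b != 0)) /\ \det (a *: A + b *: B) = 0.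
Proof.
move=> m_gt0; case: (eqVneq (\det B) 0) => [detB0 | detB_neq0].
  by exists 0, 1; rewrite oner_eq0 orbT scale0r add0r scale1r.
have B_unit : B \in unitmx by rewrite unitmxE unitfE.
have [l] : exists l, root (char_poly (A *m invmx B)) l.
  by apply/closed_rootP; rewrite size_char_poly -lt0n.
rewrite -eigenvalue_root_char => /eigenvalueP [v vAB v_neq0].
exists 1, (- l); split; first by rewrite oner_eq0.
apply/eqP/det0P; exists v => //.
have vA : v *m A = l *: (v *m B).
  by rewrite -(mulmxKV B_unit (v *m A)) -[v *m A *m _]mulmxA vAB scalemxAl.
by rewrite mulmxDr -!scalemxAr vA scale1r scaleNr addrN.
Qed.

Section Levels.
Variables (F : fieldType) (n : nat).

Lemma gzeroSS L :
  gzero F n L.+2 = (fun _ => gzero F n L.+1, fun _ => gzero F n L).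
Proof. by []. Qed.

Lemma gaddSS L (f g : ('rV[F]_n -> G F n L.+1) * ('rV[F]_2 -> G F n L)) :
  @gadd F n L.+2 f g =
    (fun x => gadd (f.1 x) (g.1 x), fun z => gadd (f.2 z) (g.2 z)).
Proof. by []. Qed.

Lemma gscaleSS L c (f : ('rV[F]_n -> G F n L.+1) * ('rV[F]_2 -> G F n L)) :
  @gscale F n L.+2 c f = (fun x => gscale c (f.1 x), fun z => gscale c (f.2 z)).
Proof. by []. Qed.

Lemma gscale0 L c : gscale c (gzero F n L) = gzero F n L.
Proof.
elim/nat_ind2: L => [||L IH1 IH2]; try exact: scaler0.
by rewrite gscaleSS gzeroSS; congr pair; apply: functional_extensionality.
Qed.

Lemma gadd0 L : gadd (gzero F n L) (gzero F n L) = gzero F n L.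
Proof.
elim/nat_ind2: L => [||L IH1 IH2]; try exact: addr0.
by rewrite gaddSS gzeroSS; congr pair; apply: functional_extensionality.
Qed.

End Levels.

Section Tanaka.
Variables (F : fieldType) (n : nat) (omega : 'rV[F]_n -> 'rV[F]_n -> 'rV[F]_2).
Hypothesis omega_linl : forall (a : F) x x' y,
  omega (a *: x + x') y = a *: omega x y + omega x' y.
Hypothesis omega_linr : forall (a : F) x y y',
  omega x (a *: y + y') = a *: omega x y + omega x y'.

Lemma omega0l y : omega 0 y = 0.
Proof. by have := omega_linl (-1) 0 0 y; rewrite scaler0 addr0 scaleN1r addNr. Qed.

Lemma omega0r x : omega x 0 = 0.
Proof. by have := omega_linr (-1) x 0 0; rewrite scaler0 addr0 scaleN1r addNr. Qed.

Lemma omegaZl a x y : omega (a *: x) y = a *: omega x y.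
Proof. by have := omega_linl a x 0 y; rewrite addr0 omega0l addr0. Qed.

Lemma omegaZr a x y : omega x (a *: y) = a *: omega x y.
Proof. by have := omega_linr a x y 0; rewrite addr0 omega0r addr0. Qed.

Lemma omegaDl x x' y : omega (x + x') y = omega x y + omega x' y.
Proof. by have := omega_linl 1 x x' y; rewrite !scale1r. Qed.

Lemma omegaDr x y y' : omega x (y + y') = omega x y + omega x y'.
Proof. by have := omega_linr 1 x y y'; rewrite !scale1r. Qed.

Lemma omega_row_suml x y : omega x y = \sum_i x 0 i *: omega 'e_i y.
Proof.
rewrite {1}(row_sum_delta x) (big_morph (omega^~ y) (fun x x' => omegaDl x x' y) (omega0l y)).
by under eq_bigr do rewrite omegaZl.
Qed.

Lemma omega_row_sumr x y : omega x y = \sum_j y 0 j *: omega x 'e_j.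
Proof.
rewrite {1}(row_sum_delta y) (big_morph (omega x) (omegaDr x) (omega0r x)).
by under eq_bigr do rewrite omegaZr.
Qed.

Lemma dim_gt0_of_generated :
  (forall z : 'rV[F]_2, exists s : seq (F * 'rV[F]_n * 'rV[F]_n),
      z = \sum_(t <- s) t.1.1 *: omega t.1.2 t.2) -> (0 < n)%N.
Proof.
move=> generated; rewrite lt0n; apply/negP => /eqP n0.
have [s one_in_span] := generated (const_mx 1).
have row0 (x : 'rV[F]_n) : x = 0 by apply/rowP => -[j j_lt]; exfalso; by rewrite n0 in j_lt.
rewrite big1_seq in one_in_span; last by move=> t _; rewrite (row0 t.1.2) omega0l scaler0.
by have := congr1 (fun z : 'rV[F]_2 => z 0 0) one_in_span; rewrite !mxE => /eqP; rewrite oner_eq0.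
Qed.

Definition gram (k : 'I_2) : 'M[F]_n := \matrix_(i, j) omega 'e_i 'e_j 0 k.

Lemma mulmx_gram_pencil x (a b : F) j :
  (x *m (a *: gram 0 + b *: gram 1)) 0 j = a * omega x 'e_j 0 0 + b * omega x 'e_j 0 1.
Proof.
rewrite mxE (omega_row_suml x) !summxE !mulr_sumr -big_split.
by apply: eq_bigr => i _; rewrite !mxE mulrDr; congr (_ + _); apply: mulrCA.
Qed.

Hypothesis omega_alt : forall x, omega x x = 0.

Lemma omega_antisym x y : omega x y = - omega y x.
Proof.
apply/eqP; rewrite -addr_eq0; have := omega_alt (x + y).
by rewrite omegaDl !omegaDr !omega_alt add0r addr0 => ->.
Qed.

Lemma mem_gSS L (phi : ('rV[F]_n -> G F n L.+1) * ('rV[F]_2 -> G F n L)) :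
  @mem_g F n omega L.+2 phi <->
  [/\ @lin_into F n n L.+1 phi.1, @lin_into F n 2 L phi.2,
      (forall x, mem_g omega (phi.1 x)), (forall z, mem_g omega (phi.2 z)) &
      [/\ @condA F n omega L phi, @condB F n omega L phi & @condC F n L phi]].
Proof. by []. Qed.

Lemma br1_zero l y : br1 omega (gzero F n l.+1) y = gzero F n l.
Proof. by case: l => [|l] //=; apply: omega0l. Qed.

Lemma brL1_zero l x : brL1 omega x (gzero F n l.+1) = gzero F n l.
Proof. by case: l => [|l]; [apply: omega0r | apply: gscale0]. Qed.

Lemma condC_of_zero_on_m2 L (phi : G F n L.+2) :
  (forall z, phi.2 z = gzero F n L) -> condC phi.
Proof.
case: L phi => [|[|L]] phi //= phi2_0 z w.
by rewrite /br2 /brL2 !phi2_0 gscale0 gadd0.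
Qed.

Lemma condB_of_zero_on_m2 L (phi : G F n L.+3) :
  (forall x z, (phi.1 x).2 z = gzero F n L) ->
  (forall z, phi.2 z = gzero F n L.+1) -> condB omega phi.
Proof. by move=> phi12_0 phi2_0 x z; rewrite /br2 phi12_0 phi2_0 brL1_zero gadd0. Qed.

Lemma mem_gzero L : mem_g omega (gzero F n L).
Proof.
elim/nat_ind2: L => [||L memL memL1] //; apply/mem_gSS; split => //.
- by move=> a x y; rewrite gscale0 gadd0.
- by move=> a x y; rewrite gscale0 gadd0.
split; first by move=> x y; rewrite /= br1_zero brL1_zero gadd0.
  by case: L {memL memL1} => [|L] //; apply: condB_of_zero_on_m2.
exact: condC_of_zero_on_m2.
Qed.

Section RankOneBracket.
Variables (v : 'rV[F]_n) (mu : 'rV[F]_n -> F) (z : 'rV[F]_2).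
Hypothesis mu_lin : forall a x y, mu (a *: x + y) = a * mu x + mu y.
Hypothesis ad_v : forall y, omega v y = mu y *: z.

Fixpoint mu_pow (j : nat) (c : F) : G F n j.+1 :=
  match j return G F n j.+1 with
  | 0 => c *: v
  | l.+1 => (fun x => mu_pow l (c * mu x), fun _ => gzero F n l)
  end.

Lemma mu_powS L c :
  mu_pow L.+1 c = (fun x => mu_pow L (c * mu x), fun _ => gzero F n L).
Proof. by []. Qed.

Lemma mu_powZ L a c : gscale a (mu_pow L c) = mu_pow L (a * c).
Proof.
elim: L a c => [|L IH] a c; first exact: scalerA.
rewrite mu_powS gscaleSS; congr pair; apply: functional_extensionality => x.
  by rewrite IH mulrA.
exact: gscale0.
Qed.

Lemma mu_powD L c d : gadd (mu_pow L c) (mu_pow L d) = mu_pow L (c + d).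
Proof.
elim: L c d => [|L IH] c d; first by rewrite /= scalerDl.
rewrite !mu_powS gaddSS; congr pair; apply: functional_extensionality => x.
  by rewrite IH mulrDl.
exact: gadd0.
Qed.

Lemma mu_pow0 L : mu_pow L 0 = gzero F n L.+1.
Proof.
elim: L => [|L IH]; first exact: scale0r.
by rewrite gzeroSS /=; congr pair; apply: functional_extensionality => x; rewrite mul0r IH.
Qed.

Lemma br1_mu_pow L c y : br1 omega (mu_pow L.+1 c) y = mu_pow L (c * mu y).
Proof. by []. Qed.

Lemma brL1_mu_pow L c x : brL1 omega x (mu_pow L.+1 c) = mu_pow L (- (c * mu x)).
Proof. by rewrite -mulN1r -mu_powZ. Qed.

(* mu(x) mu(y) is symmetric in x, y whereas the bracket is antisymmetric. *)
Lemma condA_mu_pow L c : condA omega (mu_pow L.+1 c).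
Proof.
case: L => [|L] x y; last first.
  by rewrite br1_mu_pow brL1_mu_pow mu_powD mulrAC subrr mu_pow0.
rewrite /= omegaZl omegaZr ad_v omega_antisym ad_v scalerN !scalerA.
by rewrite mulrAC subrr.
Qed.

Lemma mem_mu_pow L c : mem_g omega (mu_pow L c).
Proof.
elim: L c => [|L IH] c //; apply/mem_gSS; split => //.
- by move=> a x y; rewrite mu_powZ mu_powD [LHS]/= mu_lin mulrDr mulrCA.
- by move=> a x y; rewrite gscale0 gadd0.
- by move=> x; apply: IH.
- by move=> y; apply: mem_gzero.
split; first exact: condA_mu_pow.
  by case: L {IH} => [|L] //; apply: condB_of_zero_on_m2.
exact: condC_of_zero_on_m2.
Qed.

Variable x0 : 'rV[F]_n.
Hypothesis mu_x0 : mu x0 = 1.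

Fixpoint eval_x0 (L : nat) : G F n L.+1 -> 'rV[F]_n :=
  match L return G F n L.+1 -> 'rV[F]_n with
  | 0 => id
  | l.+1 => fun f => eval_x0 (f.1 x0)
  end.

Lemma eval_x0D L f g : eval_x0 (gadd f g) = eval_x0 f + @eval_x0 L g.
Proof. by elim: L f g => [|L IH] f g //; apply: IH. Qed.

Lemma eval_x0Z L a f : eval_x0 (gscale a f) = a *: @eval_x0 L f.
Proof. by elim: L f => [|L IH] f //; apply: IH. Qed.

Lemma eval_x0_zero L : eval_x0 (gzero F n L.+1) = 0.
Proof. by elim: L. Qed.

Lemma eval_x0_mu_pow L c : eval_x0 (mu_pow L c) = c *: v.
Proof. by elim: L c => [|L IH] c //=; rewrite IH mu_x0 mulr1. Qed.

Lemma eval_x0_lin_comb d (c : 'I_d -> F) e L :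
  eval_x0 (lin_comb c e L.+1) = \sum_i c i *: eval_x0 (e i L.+1).
Proof.
rewrite /lin_comb -big_enum /=; elim: (enum 'I_d) => [|i s IH].
  by rewrite big_nil eval_x0_zero.
by rewrite big_cons -IH eval_x0D eval_x0Z.
Qed.

Definition mu_pow_elt (i : nat) (L : nat) : G F n L :=
  match L return G F n L with
  | 0 => 0
  | l.+1 => if l == i.+1 then mu_pow l 1 else gzero F n l.+1
  end.

Lemma mu_pow_eltS i l :
  mu_pow_elt i l.+1 = if l == i.+1 then mu_pow l 1 else gzero F n l.+1.
Proof. by []. Qed.

Lemma in_prolongation_mu_pow_elt i : in_prolongation omega (mu_pow_elt i).
Proof.
split=> [[|l] | ]; first by [].
  by rewrite mu_pow_eltS; case: ifP => _; [apply: mem_mu_pow | apply: mem_gzero].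
exists i.+3 => -[|l] // l_ge; rewrite mu_pow_eltS.
by case: ifP => // /eqP l_eq; move: l_ge; rewrite l_eq ltnn.
Qed.

Lemma eval_x0_mu_pow_elt (i j : nat) :
  eval_x0 (mu_pow_elt j i.+2) = (j == i)%:R *: v.
Proof.
rewrite mu_pow_eltS eqSS eq_sym; case: eqP => _.
  by rewrite eval_x0_mu_pow.
by rewrite eval_x0_zero scale0r.
Qed.

Hypothesis v_neq0 : v != 0.

Lemma mu_pow_elt_free d (c : 'I_d -> F) :
  (forall L, lin_comb c (fun i : 'I_d => mu_pow_elt i) L = gzero F n L) ->
  forall i, c i = 0.
Proof.
move=> lin_comb0 i; have := congr1 (@eval_x0 i.+1) (lin_comb0 i.+2).
rewrite eval_x0_lin_comb eval_x0_zero (bigD1 i) // big1 => [|j j_neq_i].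
  rewrite eval_x0_mu_pow_elt eqxx scale1r [X in X = 0 -> _]/= addr0 => /eqP.
  by rewrite scaler_eq0 (negbTE v_neq0) orbF => /eqP.
by rewrite eval_x0_mu_pow_elt (inj_eq val_inj) (negbTE j_neq_i) scale0r scaler0.
Qed.

Lemma prolongation_infinite_dim_of_rank_one : prolongation_infinite_dim omega.
Proof.
move=> d; exists (fun i : 'I_d => mu_pow_elt i); split.
  by move=> i; apply: in_prolongation_mu_pow_elt.
exact: mu_pow_elt_free.
Qed.

End RankOneBracket.
End Tanaka.

Lemma exists_rank_one_bracket (F : closedFieldType) n
    (omega : 'rV[F]_n -> 'rV[F]_n -> 'rV[F]_2)
    (omega_linl : forall (a : F) x x' y,
        omega (a *: x + x') y = a *: omega x y + omega x' y)
    (omega_linr : forall (a : F) x y y',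
        omega x (a *: y + y') = a *: omega x y + omega x y') :
  (0 < n)%N -> (forall x, (forall y, omega x y = 0) -> x = 0) ->
  exists (v : 'rV[F]_n) (mu : 'rV[F]_n -> F) (z : 'rV[F]_2) (x0 : 'rV[F]_n),
    [/\ v != 0, forall a x y, mu (a *: x + y) = a * mu x + mu y,
        mu x0 = 1 & forall y, omega v y = mu y *: z].
Proof.
move=> n_gt0 nondegenerate.
have [a [b [ab_neq0 /eqP/det0P [v v_neq0 v_ker]]]] :=
  pencil_singular (gram omega 0) (gram omega 1) n_gt0.
have v_pencil y : a * omega v y 0 0 + b * omega v y 0 1 = 0.
  rewrite (omega_row_sumr omega_linr) !summxE !mulr_sumr -big_split.
  apply: big1 => j _; rewrite !mxE /= mulrCA [b * _]mulrCA -mulrDr.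
  by rewrite -(mulmx_gram_pencil omega_linl v) v_ker mxE mulr0.
have [y0 v_y0_neq0] : exists y0, omega v y0 != 0.
  have /existsP [j] : [exists j, omega v 'e_j != 0]; last by exists 'e_j.
  apply: contraT => /existsPn all0; move: v_neq0; rewrite (nondegenerate v) ?eqxx //.
  move=> y; rewrite (omega_row_sumr omega_linr) big1 // => j _.
  by rewrite (eqP (negPn (all0 j))) scaler0.
have [k v_y0_k u_line] := rV2_kernel_line ab_neq0 v_y0_neq0 (v_pencil y0).
exists v, (fun y => omega v y 0 k / omega v y0 0 k), (omega v y0), y0; split => //.
- by move=> c x y; rewrite omega_linr !mxE mulrDl mulrA.
- exact: divff.
- by move=> y; apply: u_line.
Qed.

Theorem theorem4 (F : numClosedFieldType) (n : nat)
    (omega : 'rV[F]_n -> 'rV[F]_n -> 'rV[F]_2)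
    (omega_linl : forall (a : F) x x' y,
        omega (a *: x + x') y = a *: omega x y + omega x' y)
    (omega_linr : forall (a : F) x y y',
        omega x (a *: y + y') = a *: omega x y + omega x y')
    (omega_alt : forall x, omega x x = 0)
    (generated : forall z : 'rV[F]_2, exists s : seq (F * 'rV[F]_n * 'rV[F]_n),
        z = \sum_(t <- s) t.1.1 *: omega t.1.2 t.2)
    (nondegenerate : forall x, (forall y, omega x y = 0) -> x = 0) :
  prolongation_infinite_dim omega.
Proof.
have n_gt0 := dim_gt0_of_generated omega_linl generated.
have [v [mu [z [x0 [v_neq0 mu_lin mu_x0 ad_v]]]]] :=
  exists_rank_one_bracket omega_linl omega_linr n_gt0 nondegenerate.
exact: (prolongation_infinite_dim_of_rank_one omega_linl omega_linr omega_alt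
  mu_lin ad_v mu_x0 v_neq0).
Qed.
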